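(* Let $x,y$ be two distinct points of the upper half plane $\mathbb{H}^2=\{z\in\mathbb{C}:\operatorname{Im}z>0\}$. Then the hyperbolic midpoint of the hyperbolic geodesic segment joining $x$ and $y$ is constructible by ruler and compass from the points $0,1,x,y$.
   Context: The hyperbolic distance $\rho$ on $\mathbb{H}^2$ is given by $\cosh\rho(x,y)=1+\frac{|x-y|^2}{2\,\operatorname{Im}x\,\operatorname{Im}y}$. The hyperbolic geodesic segment $J[x,y]$ is the arc joining $x$ and $y$ of the circle orthogonal to the real axis (or the vertical line, if $\operatorname{Re}x=\operatorname{Re}y$) containing $x,y$; its hyperbolic midpoint is the unique $z\in J[x,y]$ with $\rho(x,z)=\rho(z,y)$. A point is constructible by ruler and compass from a finite set $S\subset\mathbb{C}$ if it belongs to the smallest set $C\supseteq S$ closed under adding intersection points of lines through two distinct points of $C$ and circles with centre in $C$ passing through a point of $C$ (the real axis $\partial\mathbb{H}^2$ is the line through $0$ and $1$). *)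

From Stdlib Require Import Reals.
Open Scope R_scope.

Definition pt := (R * R)%type.
Definition Re (z : pt) : R := fst z.
Definition Im (z : pt) : R := snd z.

Definition in_H2 (z : pt) : Prop := Im z > 0.

Definition dist2 (x y : pt) : R := (Re x - Re y)^2 + (Im x - Im y)^2.

Definition cosh_rho (x y : pt) : R := 1 + dist2 x y / (2 * Im x * Im y).

Definition hdist (x y : pt) : R :=
  let c := cosh_rho x y in ln (c + sqrt (c * c - 1)).

Definition geod_seg (x y : pt) (z : pt) : Prop :=
  if Req_EM_T (Re x) (Re y) then
    Re z = Re x /\ Rmin (Im x) (Im y) <= Im z <= Rmax (Im x) (Im y)
  else
    (* arc, between x and y, of the circle orthogonal to the real axis
       (centre (a,0) on the real axis) through x and y *)
    exists a : R,
      dist2 x (a, 0) = dist2 y (a, 0) /\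
      dist2 z (a, 0) = dist2 x (a, 0) /\
      Im z > 0 /\
      Rmin (Re x) (Re y) <= Re z <= Rmax (Re x) (Re y).

Definition hyp_midpoint (x y z : pt) : Prop :=
  geod_seg x y z /\ hdist x z = hdist z y.

Definition line (p q : pt) (w : pt) : Prop :=
  (Re w - Re p) * (Im q - Im p) - (Im w - Im p) * (Re q - Re p) = 0.
Definition circle (c d : pt) (w : pt) : Prop := dist2 w c = dist2 d c.

Definition same_set (f g : pt -> Prop) : Prop := forall w, f w <-> g w.

Inductive constructible (S : pt -> Prop) : pt -> Prop :=
| cons_base z : S z -> constructible S z
| cons_LL p q r s z :
    constructible S p -> constructible S q ->
    constructible S r -> constructible S s ->
    p <> q -> r <> s -> ~ same_set (line p q) (line r s) ->
    line p q z -> line r s z -> constructible S z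
| cons_LC p q c d z :
    constructible S p -> constructible S q ->
    constructible S c -> constructible S d ->
    p <> q -> line p q z -> circle c d z -> constructible S z
| cons_CC c d c' d' z :
    constructible S c -> constructible S d ->
    constructible S c' -> constructible S d' ->
    ~ same_set (circle c d) (circle c' d') ->
    circle c d z -> circle c' d' z -> constructible S z.

Definition base_set (x y : pt) (w : pt) : Prop :=
  w = (0, 0) \/ w = (1, 0) \/ w = x \/ w = y.

(* A point z of J[x,y] is the hyperbolic midpoint iff
   |x - z|^2 Im y = |z - y|^2 Im x  (compare the two values of cosh rho).
   On a vertical geodesic this forces Im z = sqrt (Im x Im y), a geometric
   mean, which ruler and compass produce.  On an arc with centre a on the real
   axis: if Im x = Im y, z lies on the Euclidean perpendicular bisector of
   [x y]; otherwise, if b is the point where the Euclidean line x y meets the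
   real axis, the condition says exactly that z lies on the circle with
   diameter [a, b].  In every case z is an intersection of constructible lines
   and circles.  Existence follows from the intermediate value theorem along
   the arc. *)

From Stdlib Require Import Reals Ranalysis5 Lra Psatz Nsatz.
From Coquelicot Require Import Coquelicot.
Open Scope R_scope.

Lemma dist2_sym p q : dist2 p q = dist2 q p.
Proof. unfold dist2; ring. Qed.

Lemma dist2_refl p : dist2 p p = 0.
Proof. unfold dist2; ring. Qed.

Lemma dist2_ge0 p q : 0 <= dist2 p q.
Proof.
  unfold dist2; pose proof (pow2_ge_0 (Re p - Re q)); pose proof (pow2_ge_0 (Im p - Im q)); lra.
Qed.

Lemma dist2_axis p a : dist2 p (a, 0) = (Re p - a) ^ 2 + Im p ^ 2.
Proof. unfold dist2, Re, Im; simpl; ring. Qed.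

Lemma dist2_pos p q : p <> q -> 0 < dist2 p q.
Proof.
  destruct p as [p1 p2], q as [q1 q2]; unfold dist2, Re, Im; simpl; intros Hpq.
  assert (h1 : 0 <= (p1 - q1) ^ 2) by apply pow2_ge_0.
  assert (h2 : 0 <= (p2 - q2) ^ 2) by apply pow2_ge_0.
  destruct (Req_dec p1 q1) as [e1|n1].
  - assert (n2 : p2 <> q2) by (intros e2; apply Hpq; rewrite e1, e2; reflexivity).
    assert (0 < (p2 - q2)²) by (apply Rsqr_pos_lt; lra). unfold Rsqr in *; simpl; lra.
  - assert (0 < (p1 - q1)²) by (apply Rsqr_pos_lt; lra). unfold Rsqr in *; simpl; lra.
Qed.

Lemma cosh_rho_sym x y : cosh_rho x y = cosh_rho y x.
Proof. unfold cosh_rho; rewrite dist2_sym; f_equal; f_equal; ring. Qed.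

Lemma hdist_sym x y : hdist x y = hdist y x.
Proof. unfold hdist; rewrite cosh_rho_sym; reflexivity. Qed.

Lemma cosh_rho_ge1 x y : in_H2 x -> in_H2 y -> 1 <= cosh_rho x y.
Proof.
  unfold in_H2, cosh_rho; intros Hx Hy.
  pose proof (dist2_ge0 x y).
  assert (0 <= dist2 x y / (2 * Im x * Im y))
    by (apply Rdiv_le_0_compat; nra).
  lra.
Qed.

Lemma arcosh_inj c c' : 1 <= c -> 1 <= c' ->
  ln (c + sqrt (c * c - 1)) = ln (c' + sqrt (c' * c' - 1)) -> c = c'.
Proof.
  intros Hc Hc' H.
  pose proof (sqrt_pos (c * c - 1)); pose proof (sqrt_pos (c' * c' - 1)).
  apply ln_inv in H; try lra.
  destruct (Rtotal_order c c') as [h|[h|h]]; auto.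
  - assert (sqrt (c * c - 1) <= sqrt (c' * c' - 1)) by (apply sqrt_le_1_alt; nra). lra.
  - assert (sqrt (c' * c' - 1) <= sqrt (c * c - 1)) by (apply sqrt_le_1_alt; nra). lra.
Qed.

Lemma hdist_eq_iff x y z : in_H2 x -> in_H2 y -> in_H2 z ->
  hdist x z = hdist z y <-> dist2 x z * Im y = dist2 z y * Im x.
Proof.
  intros Hx Hy Hz.
  assert (Hcosh : hdist x z = hdist z y <-> cosh_rho x z = cosh_rho z y).
  { split; [|unfold hdist; intros ->; reflexivity].
    apply arcosh_inj; apply cosh_rho_ge1; assumption. }
  rewrite Hcosh; unfold in_H2, cosh_rho in *.
  assert (Hden : 0 < 2 * Im x * Im z * Im y) by (apply Rmult_lt_0_compat; nra).
  split; intros H.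
  - apply Rplus_eq_reg_l, (f_equal (fun t => t * (2 * Im x * Im z * Im y))) in H.
    field_simplify in H; lra.
  - apply Rplus_eq_compat_l.
    apply (Rmult_eq_reg_r (2 * Im x * Im z * Im y)); [|lra].
    field_simplify; lra.
Qed.

Lemma geod_seg_vertical x y z : Re x = Re y ->
  geod_seg x y z <-> Re z = Re x /\ Rmin (Im x) (Im y) <= Im z <= Rmax (Im x) (Im y).
Proof.
  unfold geod_seg; intros E; destruct (Req_EM_T (Re x) (Re y)); tauto.
Qed.

Lemma geod_seg_arc x y z : Re x <> Re y ->
  geod_seg x y z <->
  exists a, dist2 x (a, 0) = dist2 y (a, 0) /\ dist2 z (a, 0) = dist2 x (a, 0) /\
            Im z > 0 /\ Rmin (Re x) (Re y) <= Re z <= Rmax (Re x) (Re y).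
Proof.
  unfold geod_seg; intros E; destruct (Req_EM_T (Re x) (Re y)); tauto.
Qed.

Lemma geod_seg_sym x y z : geod_seg x y z -> geod_seg y x z.
Proof.
  destruct (Req_dec (Re x) (Re y)) as [E|E].
  - rewrite (geod_seg_vertical x y z E), (geod_seg_vertical y x z (eq_sym E)).
    rewrite Rmin_comm, Rmax_comm; intros [-> H]; auto.
  - rewrite (geod_seg_arc x y z E), (geod_seg_arc y x z (not_eq_sym E)).
    rewrite Rmin_comm, Rmax_comm; intros [a (Ha & Hz & H)].
    exists a; rewrite <- Ha; auto.
Qed.

Lemma hyp_midpoint_sym x y z : hyp_midpoint x y z -> hyp_midpoint y x z.
Proof.
  intros [Hseg Hd]; split; [apply geod_seg_sym; assumption|].
  rewrite hdist_sym, (hdist_sym z x); auto.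
Qed.

Lemma hyp_midpoint_vertical_exists x1 x2 y2 : 0 < x2 -> 0 < y2 ->
  hyp_midpoint (x1, x2) (x1, y2) (x1, sqrt (x2 * y2)).
Proof.
  intros Hx Hy.
  set (s := sqrt (x2 * y2)).
  assert (Hs : s * s = x2 * y2) by (apply sqrt_sqrt; nra).
  assert (Hs0 : 0 < s) by (apply sqrt_lt_R0; nra).
  split.
  - apply geod_seg_vertical; unfold Re, Im; simpl; [reflexivity|].
    split; [reflexivity|]; unfold Rmin, Rmax; destruct (Rle_dec x2 y2); split; nra.
  - apply hdist_eq_iff; unfold in_H2, dist2, Re, Im; simpl; nra.
Qed.

Lemma axis_circle_above_chord x y a t : in_H2 x -> in_H2 y ->
  dist2 x (a, 0) = dist2 y (a, 0) -> Re x <= t <= Re y -> (t - a) ^ 2 < dist2 x (a, 0).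
Proof.
  unfold in_H2; intros Hx Hy Ha Ht; rewrite !dist2_axis in *.
  assert (Hx2 : 0 < Im x ^ 2) by (apply pow_lt; lra).
  assert (Hy2 : 0 < Im y ^ 2) by (apply pow_lt; lra).
  destruct (Rle_or_lt (t + Re x - 2 * a) 0).
  - assert ((t - Re x) * (t + Re x - 2 * a) <= 0) by nra; nra.
  - assert ((t - Re y) * (t + Re y - 2 * a) <= 0) by nra; nra.
Qed.

Lemma hyp_midpoint_arc_exists x y : in_H2 x -> in_H2 y -> Re x < Re y ->
  exists z, hyp_midpoint x y z.
Proof.
  unfold in_H2; intros Hx Hy Hxy.
  (* the point of the real axis equidistant from x and y *)
  set (a := (Re y ^ 2 + Im y ^ 2 - (Re x ^ 2 + Im x ^ 2)) / (2 * (Re y - Re x))).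
  set (r2 := dist2 x (a, 0)).
  assert (Hr : dist2 y (a, 0) = r2).
  { unfold r2, a; rewrite !dist2_axis; field; lra. }
  assert (Hin : forall t, Re x <= t <= Re y -> 0 < r2 - (t - a) ^ 2).
  { intros t Ht; apply Rlt_Rminus, (axis_circle_above_chord x y); auto. }
  set (arc t := (t, sqrt (r2 - (t - a) ^ 2)) : pt).
  assert (Harc_end : forall p, dist2 p (a, 0) = r2 -> in_H2 p -> arc (Re p) = p).
  { intros p Hp Hp2; unfold arc.
    rewrite <- Hp, dist2_axis.
    replace ((Re p - a) ^ 2 + Im p ^ 2 - (Re p - a) ^ 2) with (Im p ^ 2) by ring.
    rewrite sqrt_pow2 by (unfold in_H2 in Hp2; lra).
    destruct p; reflexivity. }
  set (f t := dist2 x (arc t) * Im y - dist2 (arc t) y * Im x).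
  assert (Hcont : forall t, Re x <= t <= Re y -> continuity_pt f t).
  { intros t Ht; apply continuity_pt_filterlim.
    apply (@ex_derive_continuous R_AbsRing R_NormedModule).
    unfold f, arc, dist2, Re at 2 3, Im at 2 3; simpl.
    auto_derive; specialize (Hin t Ht); lra. }
  assert (Hd : 0 < dist2 x y) by (apply dist2_pos; intros ->; lra).
  assert (Hfx : f (Re x) < 0).
  { unfold f; rewrite Harc_end by (reflexivity || assumption).
    rewrite dist2_refl; nra. }
  assert (Hfy : 0 < f (Re y)).
  { unfold f; rewrite Harc_end by assumption.
    rewrite dist2_refl; nra. }
  destruct (IVT_interv f (Re x) (Re y) Hcont Hxy Hfx Hfy) as [t (Ht & Hft)].
  assert (Hz : in_H2 (arc t)) by (apply sqrt_lt_R0, Hin, Ht).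
  exists (arc t); split.
  - apply geod_seg_arc; [lra|]; exists a; repeat split.
    + rewrite Hr; reflexivity.
    + rewrite dist2_axis; unfold arc, Re, Im; cbn [fst snd].
      rewrite pow2_sqrt by (left; apply Hin, Ht); unfold r2; ring.
    + exact Hz.
    + rewrite Rmin_left by lra; exact (proj1 Ht).
    + rewrite Rmax_right by lra; exact (proj2 Ht).
  - apply hdist_eq_iff; try assumption.
    unfold f in Hft; lra.
Qed.

Lemma hyp_midpoint_exists x y : in_H2 x -> in_H2 y -> exists z, hyp_midpoint x y z.
Proof.
  intros Hx Hy; destruct (Rtotal_order (Re x) (Re y)) as [H|[H|H]].
  - apply hyp_midpoint_arc_exists; assumption.
  - destruct x as [x1 x2], y as [y1 y2]; unfold in_H2, Re, Im in *; simpl in *; subst y1.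
    eexists; apply hyp_midpoint_vertical_exists; assumption.
  - destruct (hyp_midpoint_arc_exists y x) as [z Hz]; try assumption.
    exists z; apply hyp_midpoint_sym; assumption.
Qed.

(* For h = +-sqrt 3 / 2, the apexes of the two equilateral triangles on [p q];
   the line through them is the perpendicular bisector of [p q]. *)
Definition apex (h : R) (p q : pt) : pt :=
  ((Re p + Re q) / 2 - h * (Im q - Im p), (Im p + Im q) / 2 + h * (Re q - Re p)).

Definition mid (p q : pt) : pt := ((Re p + Re q) / 2, (Im p + Im q) / 2).

Definition half_sqrt3 : R := sqrt 3 / 2.

Lemma half_sqrt3_sqr : half_sqrt3 * half_sqrt3 = 3 / 4.
Proof.
  unfold half_sqrt3; replace (sqrt 3 / 2 * (sqrt 3 / 2)) with (sqrt 3 * sqrt 3 / 4) by field.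
  rewrite sqrt_sqrt; lra.
Qed.

Lemma half_sqrt3_neq0 : half_sqrt3 <> 0.
Proof. intros E; pose proof half_sqrt3_sqr; rewrite E in *; lra. Qed.

Lemma dist2_apex_l h p q : dist2 (apex h p q) p = (1 / 4 + h * h) * dist2 p q.
Proof. unfold apex, dist2, Re, Im; simpl; field. Qed.

Lemma dist2_apex_r h p q : dist2 (apex h p q) q = (1 / 4 + h * h) * dist2 p q.
Proof. unfold apex, dist2, Re, Im; simpl; field. Qed.

Lemma apex_on_circles h p q : h * h = 3 / 4 ->
  circle p q (apex h p q) /\ circle q p (apex h p q).
Proof.
  intros Hh; unfold circle; rewrite dist2_apex_l, dist2_apex_r, Hh, (dist2_sym q p).
  split; lra.
Qed.

Lemma line_apex_iff h p q w : h <> 0 ->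
  line (apex h p q) (apex (- h) p q) w <-> dist2 w p = dist2 w q.
Proof.
  intros Hh; unfold line.
  replace ((Re w - Re (apex h p q)) * (Im (apex (- h) p q) - Im (apex h p q))
           - (Im w - Im (apex h p q)) * (Re (apex (- h) p q) - Re (apex h p q)))
    with (- h * (dist2 w p - dist2 w q))
    by (unfold apex, dist2, Re, Im; simpl; field).
  split; intros H.
  - apply Rmult_integral in H; destruct H; lra.
  - rewrite H; ring.
Qed.

Lemma dist2_apex_apex h p q : dist2 (apex h p q) (apex (- h) p q) = 4 * (h * h) * dist2 p q.
Proof. unfold apex, dist2, Re, Im; simpl; ring. Qed.

Lemma apex_neq h p q : h <> 0 -> p <> q -> apex h p q <> apex (- h) p q.
Proof.
  intros Hh Hpq E; pose proof (dist2_pos p q Hpq) as Hd.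
  assert (Hhh : 0 < h * h) by (destruct (Rlt_or_le h 0); nra).
  pose proof (dist2_apex_apex h p q) as H; rewrite E, dist2_refl in H; nra.
Qed.

Lemma line_l p q : line p q p.
Proof. unfold line; ring. Qed.

Lemma line_r p q : line p q q.
Proof. unfold line; ring. Qed.

Lemma line_mid p q : line p q (mid p q).
Proof. unfold line, mid, Re, Im; simpl; field. Qed.

Lemma dist2_mid p q : dist2 (mid p q) p = dist2 (mid p q) q.
Proof. unfold mid, dist2, Re, Im; simpl; field. Qed.

Lemma circle_mid_iff p q w : circle (mid p q) q w <->
  (Re w - Re p) * (Re w - Re q) + (Im w - Im p) * (Im w - Im q) = 0.
Proof.
  unfold circle.
  assert (E : dist2 w (mid p q) - dist2 q (mid p q)
              = (Re w - Re p) * (Re w - Re q) + (Im w - Im p) * (Im w - Im q))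
    by (unfold mid, dist2, Re, Im; simpl; field).
  split; intros H; lra.
Qed.

Lemma line_axis_iff w : line (0, 0) (1, 0) w <-> Im w = 0.
Proof. unfold line, Re, Im; simpl; split; intros H; lra. Qed.

Lemma circles_swap_differ p q : p <> q -> ~ same_set (circle p q) (circle q p).
Proof.
  intros Hpq E; pose proof (dist2_pos q p (not_eq_sym Hpq)) as Hd.
  assert (H : circle p q p) by (apply E; reflexivity).
  unfold circle in H; rewrite dist2_refl in H; lra.
Qed.

Section Constructions.

Variable S : pt -> Prop.

Lemma constructible_apex h p q : h * h = 3 / 4 ->
  constructible S p -> constructible S q -> p <> q -> constructible S (apex h p q).
Proof.
  intros Hh Hp Hq Hpq; destruct (apex_on_circles h p q Hh) as [H1 H2].
  apply (cons_CC S p q q p); auto using circles_swap_differ.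
Qed.

Lemma constructible_bisector_line p q u v w z :
  constructible S p -> constructible S q -> constructible S u -> constructible S v ->
  p <> q -> u <> v -> line u v w -> dist2 w p <> dist2 w q ->
  line u v z -> dist2 z p = dist2 z q -> constructible S z.
Proof.
  intros Hp Hq Hu Hv Hpq Huv Hw Hwpq Hz Hzpq.
  pose proof half_sqrt3_sqr; pose proof half_sqrt3_neq0.
  apply (cons_LL S u v (apex half_sqrt3 p q) (apex (- half_sqrt3) p q)); auto.
  - apply constructible_apex; auto.
  - apply constructible_apex; auto; lra.
  - apply apex_neq; auto.
  - intros E; apply Hwpq, (line_apex_iff half_sqrt3); auto; apply E; assumption.
  - apply line_apex_iff; auto.
Qed.

Lemma constructible_bisector_circle p q c d z :
  constructible S p -> constructible S q -> constructible S c -> constructible S d ->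
  p <> q -> circle c d z -> dist2 z p = dist2 z q -> constructible S z.
Proof.
  intros Hp Hq Hc Hd Hpq Hz Hzpq.
  pose proof half_sqrt3_sqr; pose proof half_sqrt3_neq0.
  apply (cons_LC S (apex half_sqrt3 p q) (apex (- half_sqrt3) p q) c d); auto.
  - apply constructible_apex; auto.
  - apply constructible_apex; auto; lra.
  - apply apex_neq; auto.
  - apply line_apex_iff; auto.
Qed.

Lemma constructible_mid p q :
  constructible S p -> constructible S q -> p <> q -> constructible S (mid p q).
Proof.
  intros Hp Hq Hpq.
  apply (constructible_bisector_line p q p q p); auto using line_l, line_mid, dist2_mid.
  rewrite dist2_refl; pose proof (dist2_pos p q Hpq); lra.
Qed.

Hypotheses (HO : constructible S (0, 0)) (HI : constructible S (1, 0)).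

Lemma constructible_axis_line p q z :
  constructible S p -> constructible S q -> p <> q -> Im p <> 0 ->
  line p q z -> Im z = 0 -> constructible S z.
Proof.
  intros Hp Hq Hpq Hp0 Hz Hz0.
  assert (HOI : ((0, 0) : pt) <> (1, 0)) by (intros E; injection E; lra).
  apply (cons_LL S p q (0, 0) (1, 0)); auto.
  - intros E; apply Hp0, line_axis_iff, E, line_l.
  - apply line_axis_iff; assumption.
Qed.

Lemma constructible_axis_circle c d z :
  constructible S c -> constructible S d -> circle c d z -> Im z = 0 -> constructible S z.
Proof.
  intros Hc Hd Hz Hz0.
  apply (cons_LC S (0, 0) (1, 0) c d); auto.
  - intros E; injection E; lra.
  - apply line_axis_iff; assumption.
Qed.

Lemma constructible_axis_bisector p q z :
  constructible S p -> constructible S q -> Re p <> Re q ->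
  Im z = 0 -> dist2 z p = dist2 z q -> constructible S z.
Proof.
  intros Hp Hq Hpq Hz0 Hz.
  assert (Hne : p <> q) by (intros ->; auto).
  assert (HOI : ((0, 0) : pt) <> (1, 0)) by (intros E; injection E; lra).
  assert (Hw : dist2 (0, 0) p <> dist2 (0, 0) q \/ dist2 (1, 0) p <> dist2 (1, 0) q).
  { destruct (Req_dec (dist2 (0, 0) p) (dist2 (0, 0) q)) as [E0|]; [right|left; assumption].
    intros E1; apply Hpq; unfold dist2, Re, Im in *; simpl in *; lra. }
  destruct Hw as [Hw|Hw];
    [apply (constructible_bisector_line p q (0, 0) (1, 0) (0, 0))
    |apply (constructible_bisector_line p q (0, 0) (1, 0) (1, 0))];
    auto using line_l, line_r; apply line_axis_iff; assumption.
Qed.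

Lemma line_vertical c u v w : line (c, u) (c, v) (c, w).
Proof. unfold line, Re, Im; simpl; ring. Qed.

(* The circle with diameter [(c, -u), (c, v)] meets the real axis at distance
   sqrt (u v) from (c, 0), by the power of the point (c, 0). *)
Lemma constructible_geometric_mean c u v : 0 < u -> 0 < v -> u <> v ->
  constructible S (c, u) -> constructible S (c, v) -> constructible S (c, sqrt (u * v)).
Proof.
  intros Hu Hv Huv Hcu Hcv.
  set (s := sqrt (u * v)).
  assert (Hs : s * s = u * v) by (apply sqrt_sqrt; nra).
  assert (Hne : ((c, u) : pt) <> (c, v)) by (intros E; injection E; auto).
  assert (Hfoot : constructible S (c, 0)).
  { apply (constructible_axis_line (c, u) (c, v)); auto using line_vertical.
    unfold Im; simpl; lra. }
  assert (Hrefl : constructible S (c, - u)).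
  { apply (cons_LC S (c, u) (c, v) (c, 0) (c, u)); auto using line_vertical.
    unfold circle, dist2, Re, Im; simpl; ring. }
  assert (Hmid : constructible S (mid (c, - u) (c, v))).
  { apply constructible_mid; auto; intros E; injection E; lra. }
  assert (Hshift : constructible S (c + s, 0)).
  { apply (constructible_axis_circle (mid (c, - u) (c, v)) (c, v)); auto.
    unfold circle, mid, dist2, Re, Im; simpl; field_simplify; nra. }
  apply (cons_LC S (c, u) (c, v) (c, 0) (c + s, 0)); auto using line_vertical.
  unfold circle, dist2, Re, Im; simpl; nra.
Qed.

End Constructions.

Lemma hyp_midpoint_vertical_eq x y z : in_H2 x -> in_H2 y -> x <> y -> Re x = Re y ->
  hyp_midpoint x y z -> z = (Re x, sqrt (Im x * Im y)).
Proof.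
  intros Hx Hy Hxy E [Hseg Hd].
  apply geod_seg_vertical in Hseg as [Hz1 Hz2]; [|assumption].
  assert (Hz : in_H2 z).
  { assert (0 < Rmin (Im x) (Im y)) by (apply Rmin_glb_lt; assumption).
    unfold in_H2; lra. }
  assert (Hxy2 : Im x <> Im y).
  { intros E2; apply Hxy; destruct x, y; unfold Re, Im in *; simpl in *; subst; reflexivity. }
  apply hdist_eq_iff in Hd; try assumption.
  unfold in_H2, dist2 in *; rewrite Hz1, <- E in Hd.
  assert (Hzz : Im z * Im z = Im x * Im y).
  { assert (F : (Im x - Im y) * (Im x * Im y - Im z * Im z) = 0) by nra.
    apply Rmult_integral in F; destruct F; lra. }
  rewrite <- Hzz, sqrt_square, <- Hz1 by lra.
  destruct z; reflexivity.
Qed.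

Lemma hyp_bisector_on_orthogonal_circle x y z a b : Im x <> Im y ->
  dist2 x (a, 0) = dist2 y (a, 0) -> dist2 z (a, 0) = dist2 x (a, 0) ->
  line x y (b, 0) -> dist2 x z * Im y = dist2 z y * Im x ->
  circle (mid (a, 0) (b, 0)) (b, 0) z.
Proof.
  intros Hxy Hx Hz Hb Hd; apply circle_mid_iff.
  unfold line, dist2, Re, Im in *; simpl in *.
  assert (F : (snd y - snd x) * ((fst z - a) * (fst z - b) + (snd z - 0) * (snd z - 0)) = 0)
    by nsatz.
  apply Rmult_integral in F; destruct F; [lra | assumption].
Qed.

Section MidpointConstruction.

Variables (S : pt -> Prop) (x y : pt).
Hypotheses (HO : constructible S (0, 0)) (HI : constructible S (1, 0))
  (Hcx : constructible S x) (Hcy : constructible S y)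
  (Hx : in_H2 x) (Hy : in_H2 y) (Hxy : x <> y).

Lemma hyp_midpoint_constructible_vertical z : Re x = Re y ->
  hyp_midpoint x y z -> constructible S z.
Proof.
  intros E Hz; rewrite (hyp_midpoint_vertical_eq x y z) by assumption.
  destruct x as [x1 x2], y as [y1 y2]; unfold in_H2, Re, Im in *; simpl in *; subst y1.
  apply constructible_geometric_mean; auto.
  intros <-; auto.
Qed.

Lemma arc_center_constructible a : Re x <> Re y ->
  dist2 x (a, 0) = dist2 y (a, 0) -> constructible S (a, 0).
Proof.
  intros E Ha; apply (constructible_axis_bisector S HO HI x y); auto.
  rewrite !(dist2_sym (a, 0)); assumption.
Qed.

Lemma hyp_midpoint_constructible_level z : Re x <> Re y -> Im x = Im y ->
  hyp_midpoint x y z -> constructible S z.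
Proof.
  intros E E2 [Hseg Hd].
  apply geod_seg_arc in Hseg as [a (Ha & Hza & Hz & _)]; [|assumption].
  apply hdist_eq_iff in Hd; try assumption.
  apply (constructible_bisector_circle S x y (a, 0) x); auto using arc_center_constructible.
  rewrite dist2_sym, E2 in Hd; unfold in_H2 in Hy; apply (Rmult_eq_reg_r (Im y)); lra.
Qed.

Lemma hyp_midpoint_constructible_arc z : Re x <> Re y -> Im x <> Im y ->
  hyp_midpoint x y z -> constructible S z.
Proof.
  intros E E2 [Hseg Hd].
  apply geod_seg_arc in Hseg as [a (Ha & Hza & Hz & _)]; [|assumption].
  apply hdist_eq_iff in Hd; try assumption.
  set (b := (Re x * Im y - Re y * Im x) / (Im y - Im x)).
  assert (Hb : line x y (b, 0)).
  { unfold line; change (Re (b, 0)) with b; change (Im (b, 0)) with 0.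
    unfold b; field; lra. }
  assert (Hcb : constructible S (b, 0)).
  { apply (constructible_axis_line S HO HI x y); auto; unfold in_H2 in Hx; lra. }
  assert (Horth : circle (mid (a, 0) (b, 0)) (b, 0) z)
    by (apply (hyp_bisector_on_orthogonal_circle x y); assumption).
  assert (Hca : constructible S (a, 0)) by (apply arc_center_constructible; assumption).
  assert (Hab : ((a, 0) : pt) <> (b, 0)).
  { intros Eab; rewrite Eab, circle_mid_iff in Horth; unfold in_H2, Re, Im in *; simpl in *.
    pose proof (Rle_0_sqr (fst z - b)); unfold Rsqr in *; nra. }
  apply (cons_CC S (a, 0) x (mid (a, 0) (b, 0)) (b, 0)); auto using constructible_mid.
  intros Same.
  assert (Ha0 : circle (a, 0) x (a, 0))
    by (apply Same, circle_mid_iff; unfold Re, Im; simpl; ring).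
  unfold circle in Ha0; rewrite dist2_refl, dist2_axis in Ha0; unfold in_H2 in Hx.
  pose proof (pow2_ge_0 (Re x - a)); pose proof (pow_lt (Im x) 2 Hx); lra.
Qed.

Lemma hyp_midpoint_constructible z : hyp_midpoint x y z -> constructible S z.
Proof.
  destruct (Req_dec (Re x) (Re y)) as [E|E].
  - apply hyp_midpoint_constructible_vertical; assumption.
  - destruct (Req_dec (Im x) (Im y)) as [E2|E2].
    + apply hyp_midpoint_constructible_level; assumption.
    + apply hyp_midpoint_constructible_arc; assumption.
Qed.

End MidpointConstruction.

Theorem theorem1p1 (x y : pt) :
  in_H2 x -> in_H2 y -> x <> y ->
  (exists z : pt, hyp_midpoint x y z) /\
  (forall z : pt, hyp_midpoint x y z -> constructible (base_set x y) z).
Proof.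
  intros Hx Hy Hxy; split.
  - apply hyp_midpoint_exists; assumption.
  - apply hyp_midpoint_constructible; auto; apply cons_base; unfold base_set; auto.
Qed.
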